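(* Fix $a>0$. For $\beta>0$ let $f_\beta(x):=\frac14\big(a-e^{x/\beta}\big)$ and define $$\mathfrak{s}_\beta(x):=\int_{-1}^x\exp\Big(-2\int_0^u f_\beta(v)\,\mathrm{d}v\Big)\mathrm{d}u,\qquad \mathfrak{s}(x):=\int_{-1}^x\exp\Big(-2\int_0^u\frac a4\,\mathrm{d}v\Big)\mathrm{d}u.$$ Then for any $x_0<0$, $\mathfrak{s}_\beta'\to\mathfrak{s}'$ and $\mathfrak{s}_\beta\to\mathfrak{s}$ uniformly on $[x_0,0]$ as $\beta\to0$. Furthermore, $\mathfrak{s}_\beta(\beta^{1/6})\to\infty$ as $\beta\to 0$. *)

From Stdlib Require Import Reals.
From Coquelicot Require Import Coquelicot.
Open Scope R_scope.

Definition f_beta (a beta x : R) : R := / 4 * (a - exp (x / beta)).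

Definition s_beta (a beta x : R) : R :=
  RInt (fun u => exp (-2 * RInt (fun v => f_beta a beta v) 0 u)) (-1) x.

Definition s_lim (a x : R) : R :=
  RInt (fun u => exp (-2 * RInt (fun v => a / 4) 0 u)) (-1) x.

From Stdlib Require Import Reals Lra Lia.
From Coquelicot Require Import Coquelicot.
Open Scope R_scope.

(* The inner integral is explicit, int_0^u f_beta = (a u - beta e^(u/beta) + beta) / 4, so
   s_beta' u = e^(-a u/2) exp(beta/2 (e^(u/beta) - 1)) while s' u = e^(-a u/2).
   For u <= 0 the correction exponent lies in [-beta/2, 0], hence |s_beta' - s'| <= s' beta/2:
   the derivatives converge at rate O(beta) uniformly on [x0, 0], and integrating from -1
   gives the same for s_beta - s.  For u > 0 the correction explodes: on [y/2, y] it is at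
   least beta/2 e^(y/(2 beta)) - beta/2, and for beta = y^6 the bound e^s >= s^2/4 makes this
   at least 1/(32 y^4) - 1/2, so s_beta(y) >= 1/(64 y^3) - a/4. *)

Definition s_beta' (a b u : R) : R := exp (- (a * u / 2) + b / 2 * (exp (u / b) - 1)).
Definition s_lim' (a u : R) : R := exp (- (a * u / 2)).

Lemma exp_le_exp x y : x <= y -> exp x <= exp y.
Proof. intros [h | ->]; [left; now apply exp_increasing | right; reflexivity]. Qed.

Lemma continuous_s_beta' a b u : 0 < b -> continuous (s_beta' a b) u.
Proof.
  intros hb. apply (@ex_derive_continuous R_AbsRing R_NormedModule).
  unfold s_beta'. auto_derive. lra.
Qed.

Lemma continuous_s_lim' a u : continuous (s_lim' a) u.
Proof.
  apply (@ex_derive_continuous R_AbsRing R_NormedModule).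
  unfold s_lim'. auto_derive. easy.
Qed.

Lemma ex_RInt_s_beta' a b c d : 0 < b -> ex_RInt (s_beta' a b) c d.
Proof.
  intros hb. apply (@ex_RInt_continuous R_CompleteNormedModule).
  intros u _. now apply continuous_s_beta'.
Qed.

Lemma ex_RInt_s_lim' a c d : ex_RInt (s_lim' a) c d.
Proof.
  apply (@ex_RInt_continuous R_CompleteNormedModule).
  intros u _. apply continuous_s_lim'.
Qed.

Lemma RInt_f_beta a b u : 0 < b ->
  RInt (f_beta a b) 0 u = / 4 * (a * u - b * exp (u / b) + b).
Proof.
  intros hb. set (F v := / 4 * (a * v - b * exp (v / b))).
  replace (/ 4 * (a * u - b * exp (u / b) + b)) with (minus (F u) (F 0)).
  - apply is_RInt_unique, (@is_RInt_derive R_CompleteNormedModule).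
    + intros v _. unfold F, f_beta. auto_derive; [easy | unfold Rdiv; field; lra].
    + intros v _. apply (@ex_derive_continuous R_AbsRing R_NormedModule).
      unfold f_beta. auto_derive. lra.
  - unfold F, minus, plus, opp; simpl. rewrite Rdiv_0_l, exp_0. ring.
Qed.

Lemma s_beta_RInt a b x : 0 < b -> s_beta a b x = RInt (s_beta' a b) (-1) x.
Proof.
  intros hb. apply RInt_ext. intros u _.
  rewrite RInt_f_beta by exact hb. unfold s_beta'. f_equal. field; lra.
Qed.

Lemma s_lim_RInt a x : s_lim a x = RInt (s_lim' a) (-1) x.
Proof.
  apply RInt_ext. intros u _.
  rewrite RInt_const. unfold s_lim', scal; simpl; unfold mult; simpl. f_equal. field.
Qed.

Lemma Derive_s_beta a b x : 0 < b -> Derive (s_beta a b) x = s_beta' a b x.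
Proof.
  intros hb.
  rewrite (Derive_ext _ (RInt (s_beta' a b) (-1))) by (intros; now apply s_beta_RInt).
  apply Derive_RInt; [| now apply continuous_s_beta'].
  apply filter_forall. intros. now apply ex_RInt_s_beta'.
Qed.

Lemma Derive_s_lim a x : Derive (s_lim a) x = s_lim' a x.
Proof.
  rewrite (Derive_ext _ (RInt (s_lim' a) (-1))) by apply s_lim_RInt.
  apply Derive_RInt; [| apply continuous_s_lim'].
  apply filter_forall. intros. apply ex_RInt_s_lim'.
Qed.

Lemma Rabs_exp_plus_sub_le x t : t <= 0 -> Rabs (exp (x + t) - exp x) <= exp x * - t.
Proof.
  intros ht. rewrite exp_plus.
  assert (exp t <= 1) by (rewrite <- exp_0; now apply exp_le_exp).
  pose proof (exp_ineq1_le t). pose proof (exp_pos x).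
  rewrite Rabs_left1 by nra. nra.
Qed.

Lemma Rabs_s_beta'_sub_s_lim'_le a b u : 0 < b -> u <= 0 ->
  Rabs (s_beta' a b u - s_lim' a u) <= s_lim' a u * (b / 2).
Proof.
  intros hb hu. unfold s_beta', s_lim'.
  assert (exp (u / b) <= 1).
  { rewrite <- exp_0. apply exp_le_exp. unfold Rdiv.
    pose proof (Rinv_0_lt_compat b hb). nra. }
  pose proof (exp_pos (u / b)).
  eapply Rle_trans; [apply Rabs_exp_plus_sub_le; nra |].
  apply Rmult_le_compat_l; [left; apply exp_pos | nra].
Qed.

Lemma s_lim'_le a L u : 0 <= a -> L <= u -> s_lim' a u <= s_lim' a L.
Proof. intros ha hu. apply exp_le_exp. nra. Qed.

Lemma Rabs_s_beta'_sub_s_lim'_unif a b L u : 0 <= a -> 0 < b -> L <= u <= 0 ->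
  Rabs (s_beta' a b u - s_lim' a u) <= s_lim' a L / 2 * b.
Proof.
  intros ha hb hu. eapply Rle_trans; [apply Rabs_s_beta'_sub_s_lim'_le; lra |].
  replace (s_lim' a L / 2 * b) with (s_lim' a L * (b / 2)) by field.
  apply Rmult_le_compat_r; [lra | apply s_lim'_le; lra].
Qed.

Lemma Rabs_RInt_le_const (f : R -> R) c d M : ex_RInt f c d ->
  (forall t, Rmin c d <= t <= Rmax c d -> Rabs (f t) <= M) ->
  Rabs (RInt f c d) <= Rabs (d - c) * M.
Proof.
  intros hf hM. apply (norm_RInt_le_const_abs f c d); [exact hM |].
  now apply (@RInt_correct R_CompleteNormedModule).
Qed.

Lemma Rabs_s_beta_sub_s_lim_le a b L x : 0 <= a -> 0 < b -> L <= -1 -> L <= x <= 0 ->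
  Rabs (s_beta a b x - s_lim a x) <= (1 - L) * (s_lim' a L / 2) * b.
Proof.
  intros ha hb hL hx.
  rewrite s_beta_RInt, s_lim_RInt by exact hb.
  assert (hI : ex_RInt (s_beta' a b) (-1) x) by now apply ex_RInt_s_beta'.
  assert (hI0 : ex_RInt (s_lim' a) (-1) x) by apply ex_RInt_s_lim'.
  change (Rabs (minus (RInt (s_beta' a b) (-1) x) (RInt (s_lim' a) (-1) x))
    <= (1 - L) * (s_lim' a L / 2) * b).
  rewrite <- (RInt_minus _ _ _ _ hI hI0).
  apply Rle_trans with (Rabs (x - -1) * (s_lim' a L / 2 * b)).
  - apply Rabs_RInt_le_const.
    + now apply ex_RInt_minus.
    + intros t [ht1 ht2]. apply Rabs_s_beta'_sub_s_lim'_unif; try easy. split.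
      * apply Rle_trans with (Rmin (-1) x); [apply Rmin_glb |]; lra.
      * apply Rle_trans with (Rmax (-1) x); [| apply Rmax_lub]; lra.
  - rewrite (Rmult_assoc (1 - L)). apply Rmult_le_compat_r.
    + pose proof (exp_pos (- (a * L / 2))). unfold s_lim'.
      apply Rmult_le_pos; lra.
    + apply Rabs_le; lra.
Qed.

Lemma uniformly_small_of_linear_bound (P : R -> Prop) (F : R -> R -> R) C :
  (forall b x, 0 < b -> P x -> Rabs (F b x) <= C * b) ->
  forall eps, 0 < eps -> exists delta, 0 < delta /\
    forall b, 0 < b < delta -> forall x, P x -> Rabs (F b x) < eps.
Proof.
  intros hF eps heps. exists (eps / (Rabs C + 1)).
  pose proof (Rabs_pos C). pose proof (Rle_abs C).
  split; [apply Rdiv_lt_0_compat; lra |].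
  intros b [hb hbd] x hx. eapply Rle_lt_trans; [now apply hF |].
  apply Rle_lt_trans with ((Rabs C + 1) * b); [apply Rmult_le_compat_r; lra |].
  apply Rmult_lt_compat_l with (r := Rabs C + 1) in hbd; [| lra].
  replace ((Rabs C + 1) * (eps / (Rabs C + 1))) with eps in hbd by (field; lra). exact hbd.
Qed.

Lemma RInt_ge_tail (f : R -> R) c d e m : c <= d <= e -> ex_RInt f c e ->
  (forall t, c < t < d -> 0 <= f t) -> (forall t, d < t < e -> m <= f t) ->
  (e - d) * m <= RInt f c e.
Proof.
  intros hd hf hpos hm.
  pose proof (@ex_RInt_Chasles_1 R_CompleteNormedModule f c d e hd hf) as hcd.
  pose proof (@ex_RInt_Chasles_2 R_CompleteNormedModule f c d e hd hf) as hde.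
  rewrite <- (@RInt_Chasles R_CompleteNormedModule f c d e hcd hde).
  assert (hI1 : 0 <= RInt f c d) by exact (RInt_ge_0 f c d (proj1 hd) hcd hpos).
  assert (hI2 : RInt (fun _ => m) d e <= RInt f d e)
    by (apply RInt_le; [lra | apply ex_RInt_const | exact hde | exact hm]).
  rewrite RInt_const in hI2. change (scal (e - d) m) with ((e - d) * m) in hI2.
  change (plus (RInt f c d) (RInt f d e)) with (RInt f c d + RInt f d e). lra.
Qed.

Lemma s_beta_ge a b y : 0 <= a -> 0 < b -> 0 < y ->
  y / 2 * (1 - a * y / 2 - b / 2 + b / 2 * exp (y / (2 * b))) <= s_beta a b y.
Proof.
  intros ha hb hy. rewrite s_beta_RInt by exact hb.
  replace (y / 2) with (y - y / 2) at 1 by field.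
  apply RInt_ge_tail; [lra | now apply ex_RInt_s_beta' | |].
  - intros t _. left. apply exp_pos.
  - intros t ht. eapply Rle_trans; [| apply exp_ineq1_le].
    assert (exp (y / (2 * b)) <= exp (t / b)).
    { apply exp_le_exp. unfold Rdiv. rewrite Rinv_mult.
      pose proof (Rinv_0_lt_compat b hb). nra. }
    nra.
Qed.

Lemma sqr_div_4_le_exp s : 0 <= s -> s ^ 2 / 4 <= exp s.
Proof.
  intros hs. replace s with (s / 2 + s / 2) at 2 by field.
  rewrite exp_plus. pose proof (exp_ineq1_le (s / 2)). nra.
Qed.

Lemma s_beta_pow6_ge a y : 0 <= a -> 0 < y <= 1 ->
  / (64 * y) - a / 4 <= s_beta a (y ^ 6) y.
Proof.
  intros ha hy.
  assert (hy6 : 0 < y ^ 6 <= 1).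
  { split; [apply pow_lt | rewrite <- (pow1 6); apply pow_incr]; lra. }
  eapply Rle_trans; [| apply s_beta_ge; lra].
  set (s := y / (2 * y ^ 6)).
  assert (hs : 0 <= s) by (unfold s; apply Rmult_le_pos, Rlt_le, Rinv_0_lt_compat; lra).
  pose proof (sqr_div_4_le_exp s hs) as hexp.
  assert (hmain : y / 2 * (y ^ 6 / 2 * (s ^ 2 / 4)) = / (64 * y ^ 3)) by (unfold s; field; lra).
  assert (hyy : y * y <= 1) by nra.
  assert (hy3 : / (64 * y) <= / (64 * y ^ 3)).
  { apply Rinv_le_contravar; [apply Rmult_lt_0_compat; [lra | apply pow_lt; lra] |].
    replace (y ^ 3) with (y * (y * y)) by ring. nra. }
  assert (y / 2 * (y ^ 6 / 2 * (s ^ 2 / 4)) <= y / 2 * (y ^ 6 / 2 * exp s))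
    by (apply Rmult_le_compat_l; [lra | apply Rmult_le_compat_l; lra]).
  assert (y / 2 * (a * y / 2) <= a / 4) by nra.
  assert (0 <= y / 2 * (1 - y ^ 6 / 2)) by (apply Rmult_le_pos; lra).
  replace (y / 2 * (1 - a * y / 2 - y ^ 6 / 2 + y ^ 6 / 2 * exp s))
    with (y / 2 * (1 - y ^ 6 / 2) - y / 2 * (a * y / 2) + y / 2 * (y ^ 6 / 2 * exp s)) by ring.
  lra.
Qed.

Lemma pow_Rpower_inv n x : (0 < n)%nat -> 0 < x -> Rpower x (/ INR n) ^ n = x.
Proof.
  intros hn hx. rewrite <- Rpower_pow by apply exp_pos.
  rewrite Rpower_mult, Rinv_l, Rpower_1 by (auto; apply not_0_INR; lia). reflexivity.
Qed.

Lemma Rpower_inv_lt n x y : (0 < n)%nat -> 0 < y -> 0 < x < y ^ n -> Rpower x (/ INR n) < y.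
Proof.
  intros hn hy hx.
  rewrite <- (Rpower_1 y) by exact hy.
  rewrite <- (Rinv_r (INR n)), <- Rpower_mult, Rpower_pow by (auto; apply not_0_INR; lia).
  apply Rlt_Rpower_l; [apply Rinv_0_lt_compat, lt_0_INR |]; easy.
Qed.

Lemma s_beta_unbounded_at_sixth_root a : 0 <= a -> forall M, exists delta, 0 < delta /\
  forall beta, 0 < beta < delta -> M < s_beta a beta (Rpower beta (1 / 6)).
Proof.
  intros ha M. set (eta := / (64 * (Rabs M + a + 1))).
  pose proof (Rabs_pos M). pose proof (Rle_abs M).
  assert (heta : 0 < eta) by (apply Rinv_0_lt_compat; lra).
  assert (heta1 : eta <= 1) by (rewrite <- Rinv_1; apply Rinv_le_contravar; lra).
  exists (eta ^ 6). split; [now apply pow_lt |].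
  intros b hb. replace (1 / 6) with (/ INR 6) by (simpl; field).
  set (y := Rpower b (/ INR 6)).
  assert (hy : 0 < y < eta) by (split; [apply exp_pos | apply Rpower_inv_lt; auto; lia]).
  pose proof (s_beta_pow6_ge a y ha ltac:(lra)) as hge.
  assert (hy6 : y ^ 6 = b) by (apply pow_Rpower_inv; lia || lra).
  rewrite hy6 in hge.
  assert (Rabs M + a + 1 < / (64 * y)).
  { replace (Rabs M + a + 1) with (/ (64 * eta)) by (unfold eta; field; lra).
    apply Rinv_lt_contravar; nra. }
  lra.
Qed.

Theorem lemma5p2 (a : R) (ha : 0 < a) :
  (forall x0 : R, x0 < 0 ->
     (forall eps : R, 0 < eps -> exists delta : R, 0 < delta /\
        forall beta : R, 0 < beta < delta ->
        forall x : R, x0 <= x <= 0 ->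
          Rabs (Derive (s_beta a beta) x - Derive (s_lim a) x) < eps) /\
     (forall eps : R, 0 < eps -> exists delta : R, 0 < delta /\
        forall beta : R, 0 < beta < delta ->
        forall x : R, x0 <= x <= 0 ->
          Rabs (s_beta a beta x - s_lim a x) < eps)) /\
  (forall M : R, exists delta : R, 0 < delta /\
     forall beta : R, 0 < beta < delta ->
       M < s_beta a beta (Rpower beta (1 / 6))).
Proof.
  split; [intros x0 hx0; split | apply s_beta_unbounded_at_sixth_root; lra].
  - apply (uniformly_small_of_linear_bound (fun x => x0 <= x <= 0)
      (fun b x => Derive (s_beta a b) x - Derive (s_lim a) x) (s_lim' a x0 / 2)).
    intros b x hb hx. rewrite Derive_s_beta, Derive_s_lim by exact hb.
    apply Rabs_s_beta'_sub_s_lim'_unif; lra.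
  - set (L := Rmin x0 (-1)).
    assert (hL : L <= x0 /\ L <= -1) by (split; [apply Rmin_l | apply Rmin_r]).
    apply (uniformly_small_of_linear_bound (fun x => x0 <= x <= 0)
      (fun b x => s_beta a b x - s_lim a x) ((1 - L) * (s_lim' a L / 2))).
    intros b x hb hx. apply Rabs_s_beta_sub_s_lim_le; lra.
Qed.
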